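(* The Petersen graph is $4$-ordered.
   Context: A simple graph $G$ is called $k$-ordered if for every sequence $v_1,\ldots,v_k$ of $k$ distinct vertices of $G$ there exists a cycle in $G$ containing these $k$ vertices in the specified (cyclic) order. The Petersen graph is the $3$-regular graph on $10$ vertices consisting of an outer $5$-cycle $B_1B_2B_3B_4B_5$, an inner ''pentagram'' on $A_1,\ldots,A_5$ with $A_i$ adjacent to $A_{i\pm 2 \bmod 5}$, and the edges $A_iB_i$ for $i=1,\ldots,5$. *)

From mathcomp Require Import all_boot.
Set Implicit Arguments. Unset Strict Implicit. Unset Printing Implicit Defensive.

(* A simple graph is a symmetric irreflexive relation e : rel T on a finType T. *)

Definition is_graph_cycle (T : finType) (e : rel T) (c : seq T) : bool :=
  [&& uniq c, 2 < size c & cycle e c].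

Definition in_cyclic_order (T : finType) (s c : seq T) : Prop :=
  exists n, subseq s (rot n c).

Definition k_ordered (T : finType) (e : rel T) (k : nat) : Prop :=
  forall s : seq T, size s = k -> uniq s ->
    exists c : seq T, is_graph_cycle e c /\ in_cyclic_order s c.

(* Petersen graph on 'I_10: vertex i (i < 5) is A_{i+1}, vertex 5 + i is B_{i+1}.
   Outer 5-cycle B_i ~ B_{i+-1}; inner pentagram A_i ~ A_{i+-2}; spokes A_i ~ B_i. *)
Definition petersen_nat_adj (a b : nat) : bool :=
  if (a < 5) && (b < 5) then ((a + 2) %% 5 == b) || ((b + 2) %% 5 == a)
  else if (5 <= a) && (5 <= b) then
    ((a - 5 + 1) %% 5 == b - 5) || ((b - 5 + 1) %% 5 == a - 5)
  else (a + 5 == b) || (b + 5 == a).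

Definition petersen_adj (x y : 'I_10) : bool := petersen_nat_adj (val x) (val y).

From mathcomp Require Import all_boot zmodp.
Set Implicit Arguments. Unset Strict Implicit. Unset Printing Implicit Defensive.

(* 4-orderedness of the Petersen graph is a finite check: each sequence of
   four distinct vertices is, after rotating the cycle, a subsequence of one
   of the 70 cycles of [petersen_cycles] (found by computer search), and the
   check is carried out by evaluation. *)

Definition cyclic_subseq (T : eqType) (s c : seq T) : bool :=
  has (fun n => subseq s (rot n c)) (iota 0 (size c)).

Lemma map_inj_subseq (T1 T2 : eqType) (f : T1 -> T2) (s c : seq T1) :
  injective f -> subseq (map f s) (map f c) = subseq s c.
Proof.
move=> inj_f; apply/idP/idP; last exact: map_subseq.
case/subseqP=> m size_m def_fs; apply/subseqP; exists m.
  by rewrite size_map in size_m.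
by apply: (inj_map inj_f); rewrite def_fs map_mask.
Qed.

Lemma map_inj_cyclic_subseq (T1 T2 : eqType) (f : T1 -> T2) (s c : seq T1) :
  injective f -> cyclic_subseq (map f s) (map f c) = cyclic_subseq s c.
Proof.
move=> inj_f; rewrite /cyclic_subseq size_map.
by apply: eq_has => n; rewrite -map_rot map_inj_subseq.
Qed.

Lemma cyclic_subseq_in_cyclic_order (T : finType) (s c : seq T) :
  cyclic_subseq s c -> in_cyclic_order s c.
Proof. by case/hasP=> n _ sub_s; exists n. Qed.

Fixpoint words (T : Type) (k : nat) (vs : seq T) : seq (seq T) :=
  if k is k'.+1 then [seq x :: w | x <- vs, w <- words k' vs] else [:: [::]].

Lemma mem_words (T : eqType) (k : nat) (vs s : seq T) :
  size s = k -> {subset s <= vs} -> s \in words k vs.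
Proof.
elim: s k => [|x s IHs] [|k] //= [size_s] sub_s.
apply: allpairs_f; first by apply: sub_s; rewrite mem_head.
by apply: IHs => // y s_y; apply: sub_s; rewrite inE s_y orbT.
Qed.

(* The vertex list [vs] is given explicitly rather than taken to be [enum T]
   so that the hypotheses can be discharged by evaluation: [enum] is locked. *)
Lemma k_ordered_of_cycles (T : finType) (e : rel T) (k : nat)
    (vs : seq T) (cs : seq (seq T)) :
  (forall x, x \in vs) -> all (is_graph_cycle e) cs ->
  all (fun s => uniq s ==> has (cyclic_subseq s) cs) (words k vs) ->
  k_ordered e k.
Proof.
move=> vs_full /allP cycle_cs /allP cover s size_s uniq_s.
have /implyP /(_ uniq_s) /hasP [c cs_c sub_s] :=
  cover s (mem_words size_s (fun x _ => vs_full x)).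
exists c; split; first exact: cycle_cs.
exact: cyclic_subseq_in_cyclic_order.
Qed.

Lemma mem_inZp_iota (n : nat) (x : 'I_n.+1) : x \in map inZp (iota 0 n.+1).
Proof. by apply/mapP; exists (val x); rewrite ?valZpK // mem_iota ltn_ord. Qed.

(* [inZp] rather than [inord], whose opaque [insub] blocks evaluation. *)
Definition petersen_cycles : seq (seq 'I_10) := map (map inZp)
  [:: [:: 0; 5; 6; 1; 3; 8; 9; 4; 2]; [:: 0; 2; 4; 9; 8; 3; 1; 6; 5];
      [:: 0; 3; 1; 4; 2; 7; 8; 9; 5]; [:: 0; 5; 9; 8; 7; 2; 4; 1; 3];
      [:: 0; 2; 4; 9; 5; 6; 7; 8; 3]; [:: 0; 3; 8; 7; 6; 5; 9; 4; 2];
      [:: 0; 3; 8; 9; 4; 1; 6; 7; 2]; [:: 0; 2; 7; 6; 1; 4; 9; 8; 3];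
      [:: 0; 5; 9; 4; 1; 3; 8; 7; 2]; [:: 0; 2; 7; 8; 3; 1; 4; 9; 5];
      [:: 0; 2; 7; 8; 9; 5; 6; 1; 3]; [:: 0; 3; 1; 6; 5; 9; 8; 7; 2];
      [:: 0; 5; 9; 4; 2; 7; 6; 1; 3]; [:: 1; 3; 8; 9; 5; 6; 7; 2; 4];
      [:: 0; 3; 1; 6; 7; 2; 4; 9; 5]; [:: 1; 4; 2; 7; 6; 5; 9; 8; 3];
      [:: 0; 5; 6; 7; 8; 9; 4; 1; 3]; [:: 0; 2; 4; 1; 6; 7; 8; 9; 5];
      [:: 0; 5; 6; 1; 4; 2; 7; 8; 3]; [:: 0; 5; 9; 8; 7; 6; 1; 4; 2];
      [:: 0; 3; 1; 4; 9; 8; 7; 6; 5]; [:: 0; 3; 8; 7; 2; 4; 1; 6; 5];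
      [:: 0; 2; 7; 8; 9; 4; 1; 6; 5]; [:: 0; 5; 6; 7; 8; 3; 1; 4; 2];
      [:: 0; 2; 7; 6; 1; 3; 8; 9; 5]; [:: 0; 5; 9; 4; 1; 6; 7; 8; 3];
      [:: 0; 5; 6; 1; 4; 9; 8; 7; 2]; [:: 0; 3; 8; 9; 5; 6; 1; 4; 2];
      [:: 0; 2; 4; 9; 8; 7; 6; 1; 3]; [:: 0; 2; 7; 6; 5; 9; 4; 1; 3];
      [:: 1; 6; 5; 9; 4; 2; 7; 8; 3]; [:: 0; 5; 9; 8; 3; 1; 6; 7; 2];
      [:: 0; 3; 8; 7; 6; 1; 4; 9; 5]; [:: 0; 3; 8; 9; 4; 2; 7; 6; 5];
      [:: 0; 5; 6; 7; 2; 4; 9; 8; 3]; [:: 0; 3; 1; 6; 7; 8; 9; 4; 2];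
      [:: 0; 2; 4; 1; 3; 8; 7; 6; 5]; [:: 0; 3; 1; 4; 9; 5; 6; 7; 2];
      [:: 0; 2; 4; 1; 6; 5; 9; 8; 3]; [:: 1; 3; 8; 7; 2; 4; 9; 5; 6];
      [:: 0; 3; 1; 6; 7; 8; 9; 5]; [:: 0; 2; 4; 9; 8; 7; 6; 5];
      [:: 0; 5; 6; 1; 3; 8; 7; 2]; [:: 1; 4; 9; 5; 6; 7; 8; 3];
      [:: 1; 6; 7; 2; 4; 9; 8; 3]; [:: 0; 3; 8; 7; 6; 1; 4; 2];
      [:: 0; 3; 1; 6; 5; 9; 4; 2]; [:: 0; 2; 7; 8; 9; 4; 1; 3];
      [:: 0; 2; 4; 9; 5; 6; 1; 3]; [:: 0; 2; 7; 6; 1; 4; 9; 5];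
      [:: 0; 2; 7; 8; 3; 1; 6; 5]; [:: 0; 3; 1; 4; 2; 7; 6; 5];
      [:: 0; 5; 6; 7; 8; 9; 4; 2]; [:: 0; 3; 8; 7; 2; 4; 9; 5];
      [:: 0; 2; 7; 6; 5; 9; 8; 3]; [:: 1; 3; 8; 7; 6; 5; 9; 4];
      [:: 0; 3; 1; 4; 9; 8; 7; 2]; [:: 0; 5; 9; 4; 2; 7; 8; 3];
      [:: 0; 5; 6; 7; 2; 4; 1; 3]; [:: 0; 5; 9; 8; 3; 1; 4; 2];
      [:: 0; 5; 9; 4; 1; 6; 7; 2]; [:: 1; 4; 2; 7; 8; 9; 5; 6];
      [:: 0; 2; 4; 1; 6; 7; 8; 3]; [:: 0; 3; 8; 9; 4; 1; 6; 5];
      [:: 0; 2; 4; 1; 3; 8; 9; 5]; [:: 0; 3; 8; 9; 5; 6; 7; 2];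
      [:: 1; 3; 8; 9; 4; 2; 7; 6]; [:: 0; 5; 9; 8; 7; 6; 1; 3];
      [:: 0; 5; 6; 1; 4; 9; 8; 3]; [:: 1; 6; 5; 9; 8; 7; 2; 4]].

Definition petersen_vertices : seq 'I_10 := map inZp (iota 0 10).

(* Evaluated on the underlying naturals, where comparisons are much cheaper. *)
Lemma petersen_cycles_cover :
  all (fun s => uniq s ==> has (cyclic_subseq s) petersen_cycles)
      (words 4 petersen_vertices).
Proof.
have cover_val : all (fun s => uniq s ==>
    has (cyclic_subseq (map val s)) (map (map val) petersen_cycles))
  (words 4 petersen_vertices) by vm_compute.
apply: sub_all cover_val => s.
by rewrite has_map (eq_has (fun c => map_inj_cyclic_subseq s c val_inj)).
Qed.

Theorem theorem2p5 : k_ordered petersen_adj 4.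
Proof.
apply: k_ordered_of_cycles (@mem_inZp_iota 9) _ petersen_cycles_cover.
by vm_compute.
Qed.
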